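(* Let $\mathbf{F}$ be a field of characteristic $3$, let $\lambda=(\lambda_1,\lambda_2)$ be a partition with $m=\lambda_1-\lambda_2$, and let $t\in\mathbf{N}$. Then in $S_\mathbf{F}(\lambda)$, \[\psi_{m,t}=\psi_{m,t-1}\Big[\tbinom{m_{t-1}}{2}+\tbinom{m_{t-1}}{1}b(3^{t-1})+\tbinom{m_{t-1}}{0}b(2\cdot3^{t-1})\Big]+\tbinom{m_{t-1}}{2}b(3^{t-1})+\tbinom{m_{t-1}}{1}b(2\cdot3^{t-1}),\] where $m_{t-1}$ is the $(t-1)$-th base-3 digit of $m$.
   Context: $S_\mathbf{F}(\lambda)=\operatorname{End}_{\mathbf{F}S_r}(M^\lambda)$ is a commutative $\mathbf{F}$-algebra with basis $b(0)=\mathbf{1},\dots,b(\lambda_2)$ and multiplication $b(i)b(j)=\sum_{h=\max\{i,j\}}^{i+j}\binom{h}{i}\binom{h}{j}\binom{m+i+j}{i+j-h}b(h)$, $b(a)=0$ for $a>\lambda_2$. For $m=\sum_u m_u3^u$ in base 3, $m_{<u}=\sum_{s<u}m_s3^s$ and $\psi_{m,u}=\sum_{k=1}^{3^u-1}\binom{m_{<u}}{3^u-k}b(k)$ (so $\psi_{m,0}=0$). *)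

From HB Require Import structures.
From mathcomp Require Import all_boot all_order all_algebra.
Set Implicit Arguments. Unset Strict Implicit. Unset Printing Implicit Defensive.
Import Order.TTheory GRing.Theory Num.Theory.
Local Open Scope ring_scope.

(* The algebra S_F(lambda), lambda = (l1, l2), m = l1 - l2, is modelled
   concretely by coordinate row vectors w.r.t. the basis b(0), ..., b(l2):
   an element x is the row vector 'rV[F]_(l2.+1), x = \sum_k x 0 k *: b(k). *)
Definition Salg (F : fieldType) (l2 : nat) := 'rV[F]_(l2.+1).

(* basis element b(a); b(a) = 0 when a > l2 *)
Definition bS (F : fieldType) (l2 a : nat) : Salg F l2 :=
  \row_(j < l2.+1) (if (j : nat) == a then 1 else 0).

Definition bmul (F : fieldType) (l2 m i j : nat) : Salg F l2 :=
  \sum_(maxn i j <= h < (i + j).+1)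
     ('C(h, i) * 'C(h, j) * 'C(m + i + j, i + j - h))%:R *: bS F l2 h.

Definition mulS (F : fieldType) (l2 m : nat) (x y : Salg F l2) : Salg F l2 :=
  \sum_(i < l2.+1) \sum_(j < l2.+1) (x 0 i * y 0 j) *: bmul F l2 m i j.

Definition digit3 (m u : nat) : nat := (m %/ 3 ^ u) %% 3.
Definition trunc3 (m u : nat) : nat := m %% 3 ^ u.

Definition psi (F : fieldType) (l2 m u : nat) : Salg F l2 :=
  \sum_(1 <= k < 3 ^ u) 'C(trunc3 m u, 3 ^ u - k)%:R *: bS F l2 k.

From HB Require Import structures.
From mathcomp Require Import all_boot all_order all_algebra.
From mathcomp Require Import zify.
Import GRing.Theory.
Local Open Scope ring_scope.

(* Write n = 3^u, r = m_{<u} and d = m_u, so that m_{<u+1} = r + d n with r < n.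
   The argument has three ingredients.
   - The product mulS is bilinear and sends b(i), b(j) to bmul i j (first section).
   - Lucas' theorem in characteristic p: C(r + d p^u, q p^u + s) = C(d,q) C(r,s)
     whenever r, s < p^u, read off from (X+1)^(r + d p^u) = (X^(p^u) + 1)^d (X+1)^r.
     Consequently b(k) b(a) = b(a + k) whenever k < p^u and p^u divides a, so
     multiplying psi_{m,u} by b(a) translates it by a (psi_shift).
   - Cutting the range 1 <= k < 3n of psi_{m,u+1} at n and 2n and evaluating the
     coefficients with Lucas' theorem gives
       psi_{m,u+1} = C(d,2) psi + C(d,1) psi[+n] + C(d,0) psi[+2n]
                     + C(d,2) b(n) + C(d,1) b(2n)                      (psi_succ).
   The theorem follows by expanding its right-hand side bilinearly. *)

Section BasisAlgebra.
Variables (F : fieldType) (l2 m : nat).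
Local Notation b := (bS F l2).

Lemma bS_out a : (l2 < a)%N -> b a = 0.
Proof.
move=> lt_l2a; apply/rowP => j; rewrite !mxE.
by rewrite ifF //; apply: contra_ltnF (leq_trans (ltn_ord j) lt_l2a) => /eqP->.
Qed.

Lemma sum_coord_bS (V : lmodType F) i (f : nat -> V) :
  \sum_(a < l2.+1) b i 0 a *: f a = if (i <= l2)%N then f i else 0.
Proof.
under eq_bigr => a _ do rewrite mxE (fun_if (fun c => c *: f a)) scale1r scale0r.
by rewrite -big_mkcond big_ord1_eq.
Qed.

Lemma bmul_out i j : (l2 < maxn i j)%N -> bmul F l2 m i j = 0.
Proof.
move=> lt_l2; rewrite /bmul big_nat_cond big1 // => h /andP[/andP[le_h _] _].
by rewrite bS_out ?scaler0 // (leq_trans lt_l2 le_h).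
Qed.

Lemma mulS_bS i j : mulS m (b i) (b j) = bmul F l2 m i j.
Proof.
rewrite /mulS.
under eq_bigr => a _ do under eq_bigr => c _ do rewrite -scalerA.
under eq_bigr => a _ do rewrite -scaler_sumr sum_coord_bS.
have [le_jl2|lt_l2j] := leqP j l2; last first.
  rewrite bmul_out ?leq_max ?lt_l2j ?orbT //.
  by rewrite big1 // => a _; rewrite scaler0.
rewrite (sum_coord_bS _ i (fun a => bmul F l2 m a j)).
by case: leqP => // lt_l2i; rewrite bmul_out // leq_max lt_l2i.
Qed.

Lemma mulS_addl (x1 x2 y : Salg F l2) :
  mulS m (x1 + x2) y = mulS m x1 y + mulS m x2 y.
Proof.
rewrite /mulS -big_split; apply: eq_bigr => a _; rewrite -big_split.
by apply: eq_bigr => c _; rewrite !mxE mulrDl scalerDl.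
Qed.

Lemma mulS_addr (x y1 y2 : Salg F l2) :
  mulS m x (y1 + y2) = mulS m x y1 + mulS m x y2.
Proof.
rewrite /mulS -big_split; apply: eq_bigr => a _; rewrite -big_split.
by apply: eq_bigr => c _; rewrite !mxE mulrDr scalerDl.
Qed.

Lemma mulS_scalel k (x y : Salg F l2) : mulS m (k *: x) y = k *: mulS m x y.
Proof.
rewrite /mulS scaler_sumr; apply: eq_bigr => a _; rewrite scaler_sumr.
by apply: eq_bigr => c _; rewrite !mxE scalerA mulrA.
Qed.

Lemma mulS_scaler k (x y : Salg F l2) : mulS m x (k *: y) = k *: mulS m x y.
Proof.
rewrite /mulS scaler_sumr; apply: eq_bigr => a _; rewrite scaler_sumr.
by apply: eq_bigr => c _; rewrite !mxE scalerA mulrCA.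
Qed.

Lemma mulS_suml I (r : seq I) (P : pred I) (f : I -> Salg F l2) y :
  mulS m (\sum_(i <- r | P i) f i) y = \sum_(i <- r | P i) mulS m (f i) y.
Proof.
apply: (big_morph (mulS m ^~ y) (fun x1 x2 => mulS_addl x1 x2 y)).
by rewrite -[0 in LHS](scale0r 0) mulS_scalel scale0r.
Qed.
End BasisAlgebra.

Lemma coef_XaddC1_exp (R : nzRingType) N K :
  (('X + 1 : {poly R}) ^+ N)`_K = 'C(N, K)%:R.
Proof.
rewrite exprD1n coef_sum.
rewrite (eq_bigr (fun i : 'I_N.+1 => if i == K :> nat then 'C(N, i)%:R else 0)).
  rewrite -big_mkcond (big_ord1_eq _ (fun i => 'C(N, i)%:R)) ltnS.
  by case: leqP => // ?; rewrite bin_small.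
by move=> i _; rewrite coefMn coefXn eq_sym; case: eqP; rewrite ?mul0rn.
Qed.

Lemma lucas_pchar {F : fieldType} {p : nat} (hp : p \in [pchar F]) u r d q s :
  (r < p ^ u)%N -> (s < p ^ u)%N ->
  'C(r + d * p ^ u, q * p ^ u + s)%:R = ('C(d, q) * 'C(r, s))%:R :> F.
Proof.
set n := (p ^ u)%N => lt_rn lt_sn.
have frobenius : ('X + 1 : {poly F}) ^+ n = 'X^n + 1.
  by rewrite exprDn_pchar ?expr1n // pnatX (pnatE _ (pcharf_prime hp)) pchar_poly hp.
have expand : ('X + 1 : {poly F}) ^+ (r + d * n) =
    \sum_(i < d.+1) 'C(d, i)%:R *: ('X^(n * i) * ('X + 1) ^+ r).
  rewrite exprD mulnC exprM frobenius exprD1n mulrC big_distrl /=.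
  by apply: eq_bigr => i _; rewrite -exprM scaler_nat mulrnAl.
have block i : ('X^(n * i) * ('X + 1 : {poly F}) ^+ r)`_(q * n + s) =
    if i == q then 'C(r, s)%:R else 0.
  rewrite coefXnM coef_XaddC1_exp; have [lt_iq|lt_qi|->] := ltngtP i q.
  - rewrite ifF ?bin_small //; [nia | apply/negbTE; rewrite -leqNgt; nia].
  - by rewrite ifT //; nia.
  - rewrite ifF ?(mulnC q) ?addKn //; apply/negbTE; rewrite -leqNgt; nia.
rewrite -coef_XaddC1_exp expand coef_sum.
rewrite (eq_bigr (fun i : 'I_d.+1 =>
  if i == q :> nat then ('C(d, i) * 'C(r, s))%:R else 0)).
  rewrite -big_mkcond (big_ord1_eq _ (fun i => ('C(d, i) * 'C(r, s))%:R)) ltnS.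
  by case: leqP => // ?; rewrite bin_small.
by move=> i _; rewrite coefZ block natrM; case: eqP; rewrite ?mulr0.
Qed.

Lemma bmul_shift {F : fieldType} {p : nat} (hp : p \in [pchar F]) l2 m {u k a} :
  (k < p ^ u)%N -> (p ^ u %| a)%N -> bmul F l2 m k a = bS F l2 (a + k).
Proof.
set n := (p ^ u)%N => lt_kn /dvdnP[q ->].
have lucas := lucas_pchar hp u.
have le_max : (maxn k (q * n) <= q * n + k)%N by rewrite geq_max leq_addl leq_addr.
rewrite /bmul addnC big_nat_recr //= big_nat_cond big1 ?add0r => [|h].
  have top1 : 'C(q * n + k, k)%:R = 1 :> F.
    by have := lucas k q 0 k lt_kn lt_kn; rewrite mul0n add0n bin0 binn addnC.
  have top2 : 'C(q * n + k, q * n)%:R = 1 :> F.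
    have := lucas k q q 0 lt_kn (leq_ltn_trans (leq0n k) lt_kn).
    by rewrite addn0 !bin0 binn addnC.
  by rewrite subnn bin0 muln1 natrM top1 top2 mulr1 scale1r.
move=> /andP[/andP[+ lt_h] _]; rewrite geq_max => /andP[_ le_qnh].
have vanish : 'C(h, k)%:R = 0 :> F.
  have lt_s : (h - q * n < k)%N by lia.
  have := lucas (h - q * n)%N q 0 k (ltn_trans lt_s lt_kn) lt_kn.
  by rewrite mul0n add0n subnK // bin0 mul1n (bin_small lt_s).
by rewrite !natrM vanish !mul0r scale0r.
Qed.

Lemma modn_expS b m u : (m %% b ^ u.+1 = m %% b ^ u + (m %/ b ^ u) %% b * b ^ u)%N.
Proof.
by rewrite modn_divl -expnS -(modn_dvdm m (dvdn_exp2l b (leqnSn u))) addnC -divn_eq.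
Qed.

Lemma sum_split3 (V : nmodType) n (f : nat -> V) : (0 < n)%N ->
  \sum_(1 <= k < 3 * n) f k = \sum_(1 <= k < n) f k + f n
     + \sum_(1 <= k < n) f (n + k)%N + f (2 * n)%N
     + \sum_(1 <= k < n) f (2 * n + k)%N.
Proof.
move=> n_gt0.
have shift a : \sum_(a.+1 <= i < a + n) f i = \sum_(1 <= k < n) f (a + k)%N.
  rewrite (big_addn 1 _ a) (_ : (a + n - a = n)%N); last by lia.
  by apply: eq_bigr => i _; rewrite addnC.
rewrite (@big_cat_nat _ _ _ n 1 (3 * n)); [|lia|lia].
rewrite (@big_ltn _ _ _ n (3 * n)); last by lia.
rewrite (@big_cat_nat _ _ _ (2 * n) n.+1 (3 * n)); [|lia|lia].
rewrite (@big_ltn _ _ _ (2 * n) (3 * n)); last by lia.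
rewrite (_ : (2 * n)%N = (n + n)%N); last by lia.
rewrite (_ : (3 * n)%N = ((n + n) + n)%N); last by lia.
by rewrite !shift /= !addrA; under eq_bigr do rewrite add0n.
Qed.

Definition psi_shift (F : fieldType) (l2 m u a : nat) : Salg F l2 :=
  \sum_(1 <= k < 3 ^ u) 'C(trunc3 m u, 3 ^ u - k)%:R *: bS F l2 (a + k).

Lemma mulS_psi_basis (F : fieldType) (hF : (3 \in [pchar F])%N) l2 m u a :
  (3 ^ u %| a)%N -> mulS m (psi F l2 m u) (bS F l2 a) = psi_shift F l2 m u a.
Proof.
move=> dvd_a; rewrite /psi mulS_suml big_nat_cond [RHS]big_nat_cond.
apply: eq_bigr => k /andP[/andP[_ lt_k] _].
by rewrite mulS_scalel mulS_bS (bmul_shift hF l2 m lt_k dvd_a).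
Qed.

Lemma psi_succ (F : fieldType) (hF : (3 \in [pchar F])%N) l2 m u :
  psi F l2 m u.+1 =
    'C(digit3 m u, 2)%:R *: psi_shift F l2 m u 0
    + 'C(digit3 m u, 1)%:R *: psi_shift F l2 m u (3 ^ u)
    + 'C(digit3 m u, 0)%:R *: psi_shift F l2 m u (2 * 3 ^ u)
    + 'C(digit3 m u, 2)%:R *: bS F l2 (3 ^ u)
    + 'C(digit3 m u, 1)%:R *: bS F l2 (2 * 3 ^ u).
Proof.
rewrite /psi {1}/trunc3 modn_expS expnS -/(trunc3 m u) -/(digit3 m u).
set n := (3 ^ u)%N; set r := trunc3 m u; set d := digit3 m u.
have n_gt0 : (0 < n)%N by rewrite expn_gt0.
have lt_rn : (r < n)%N by rewrite ltn_mod.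
have lucas := lucas_pchar hF u r d.
(* On the j-th block, the coefficient of b(jn + k) is C(d, 2-j) C(r, n-k). *)
have block j a : (j <= 2)%N -> a = (j * n)%N ->
    \sum_(1 <= k < n) 'C(r + d * n, 3 * n - (a + k))%:R *: bS F l2 (a + k)
    = 'C(d, 2 - j)%:R *: psi_shift F l2 m u a.
  move=> le_j2 ->; rewrite /psi_shift scaler_sumr big_nat_cond [RHS]big_nat_cond.
  apply: eq_bigr => k /andP[/andP[k_gt0 lt_kn] _].
  rewrite scalerA -natrM -lucas //; last by lia.
  by congr ('C(_, _)%:R *: _); case: j le_j2 => [|[|[|]]] //; lia.
(* At the cut points, the coefficient of b(jn) is C(d, 3-j). *)
have corner j a : (1 <= j <= 2)%N -> a = (j * n)%N ->
    'C(r + d * n, 3 * n - a)%:R = 'C(d, 3 - j)%:R :> F.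
  move=> /andP[j_gt0 le_j2] ->; have := lucas (3 - j)%N 0 lt_rn n_gt0.
  rewrite addn0 bin0 muln1 => <-; congr ('C(_, _)%:R).
  by case: j j_gt0 le_j2 => [|[|[|]]] //; lia.
rewrite sum_split3 // (block 0%N 0%N) // (block 1%N n) ?mul1n //.
rewrite (block 2%N (2 * n)%N) //.
rewrite (corner 1%N n) ?mul1n // (corner 2%N (2 * n)%N) //.
rewrite -!addrA; congr (_ + _); rewrite addrCA; congr (_ + _).
by rewrite [RHS]addrC addrA.
Qed.

Theorem mainTheorem6 (F : fieldType) (hF : (3 \in [pchar F])%N)
  (l1 l2 : nat) (hl : (l2 <= l1)%N) (t : nat) (ht : (1 <= t)%N) :
  let m := (l1 - l2)%N in
  let d := digit3 m t.-1 in
  let b := bS F l2 in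
  psi F l2 m t =
    mulS m (psi F l2 m t.-1)
      ('C(d, 2)%:R *: b 0%N + 'C(d, 1)%:R *: b (3 ^ t.-1)%N
       + 'C(d, 0)%:R *: b (2 * 3 ^ t.-1)%N)
    + 'C(d, 2)%:R *: b (3 ^ t.-1)%N + 'C(d, 1)%:R *: b (2 * 3 ^ t.-1)%N.
Proof.
case: t ht => // u _ m d b /=.
rewrite psi_succ // !mulS_addr !mulS_scaler.
by rewrite !mulS_psi_basis ?dvdn0 ?dvdn_mull.
Qed.
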